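(* Let $\langle X, d\rangle$ be a metric space with completion $\langle \widehat{X},\widehat{d}\rangle$. The following conditions are equivalent: (1) $\langle \widehat{X},\widehat{d}\rangle$ is cofinally Bourbaki quasi-complete; (2) $X$ (with its own metric $d$) is strongly uniformly locally bounded and, for every metric space $\langle Y,\rho\rangle$, every Cauchy-Lipschitz function $f:X\to Y$ is strongly uniformly locally Lipschitz; (3) $X$ is strongly uniformly locally bounded and every real-valued Cauchy-Lipschitz function on $X$ is strongly uniformly locally Lipschitz; (4) $X$ is strongly uniformly locally bounded and the real-valued strongly uniformly locally Lipschitz functions on $X$ are uniformly dense in $CC(X,\mathbb{R})$, the space of real-valued Cauchy-continuous functions on $X$.
   Context: For $\varepsilon>0$ and $x,y$ in a metric space $\langle Z,d\rangle$, an $\varepsilon$-chain from $x$ to $y$ is a finite sequence $x=x_0,\dots,x_n=y$ in $Z$ with $d(x_{i-1},x_i)<\varepsilon$ for all $i$. The $\varepsilon$-chainable component $S^\infty_d(x,\varepsilon)$ is the set of points of $Z$ joinable to $x$ by an $\varepsilon$-chain. A sequence $\langle x_n\rangle$ is cofinally Bourbaki quasi-Cauchy if for every $\varepsilon>0$ there is an infinite $N_\varepsilon\subseteq\mathbb{N}$ such that for all $j,k\in N_\varepsilon$, $x_j$ and $x_k$ can be joined by an $\varepsilon$-chain; $Z$ is cofinally Bourbaki quasi-complete if every such sequence has a cluster point. $Z$ is strongly uniformly locally bounded if there is $\delta>0$ with $S^\infty_d(x,\delta)$ bounded for every $x\in Z$. A function $f:X\to Y$ is Cauchy-Lipschitz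 if $f$ is Lipschitz on the range of every Cauchy sequence in $X$; it is Cauchy-continuous if it maps Cauchy sequences to Cauchy sequences; it is strongly uniformly locally Lipschitz (uniformly locally chain-Lipschitz) if there is $\delta>0$ such that for every $x\in X$ the restriction of $f$ to $S^\infty_d(x,\delta)$ is Lipschitz (constant may depend on $x$). Uniform density refers to the sup-norm (uniform convergence). *)

From Stdlib Require Import Reals Lra.
Open Scope R_scope.

Record MetricSpace := {
  carrier :> Type;
  dist : carrier -> carrier -> R;
  dist_ge0 : forall x y, 0 <= dist x y;
  dist_eq0 : forall x y, dist x y = 0 <-> x = y;
  dist_sym : forall x y, dist x y = dist y x;
  dist_tri : forall x y z, dist x z <= dist x y + dist y z
}.

Arguments dist {m} _ _.

Lemma Rdist_ge0 (x y : R) : 0 <= Rabs (x - y).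
Proof. apply Rabs_pos. Qed.
Lemma Rdist_eq0 (x y : R) : Rabs (x - y) = 0 <-> x = y.
Proof.
  split; intro H.
  - destruct (Req_dec (x - y) 0) as [E|E]; [lra|].
    exfalso; apply (Rabs_no_R0 _ E); exact H.
  - subst; rewrite Rminus_diag; apply Rabs_R0.
Qed.
Lemma Rdist_sym (x y : R) : Rabs (x - y) = Rabs (y - x).
Proof. apply Rabs_minus_sym. Qed.
Lemma Rdist_tri (x y z : R) : Rabs (x - z) <= Rabs (x - y) + Rabs (y - z).
Proof.
  replace (x - z) with ((x - y) + (y - z)) by ring. apply Rabs_triang.
Qed.
Definition RealLine : MetricSpace :=
  {| carrier := R; dist := fun x y => Rabs (x - y);
     dist_ge0 := Rdist_ge0; dist_eq0 := Rdist_eq0;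
     dist_sym := Rdist_sym; dist_tri := Rdist_tri |}.

Section Defs.
Context {X : MetricSpace}.

Inductive chain (eps : R) : X -> X -> Prop :=
  | chain_refl x : chain eps x x
  | chain_step x y z : dist x y < eps -> chain eps y z -> chain eps x z.

Definition chain_component (x : X) (eps : R) : X -> Prop := fun z => chain eps x z.

Definition bounded_set (A : X -> Prop) : Prop :=
  exists x0 M, forall a, A a -> dist x0 a <= M.

Definition infinite_nat (N : nat -> Prop) : Prop :=
  forall m, exists n, (m <= n)%nat /\ N n.

Definition cofinally_BQC (x : nat -> X) : Prop :=
  forall eps, 0 < eps -> exists N : nat -> Prop, infinite_nat N /\
    forall j k, N j -> N k -> chain eps (x j) (x k).

Definition cluster_point (x : nat -> X) (p : X) : Prop :=
  forall eps, 0 < eps -> forall m, exists n, (m <= n)%nat /\ dist (x n) p < eps.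

Definition cofinally_BQ_complete : Prop :=
  forall x : nat -> X, cofinally_BQC x -> exists p, cluster_point x p.

Definition strongly_ULB : Prop :=
  exists delta, 0 < delta /\ forall x, bounded_set (chain_component x delta).

Definition cauchy_seq (x : nat -> X) : Prop :=
  forall eps, 0 < eps -> exists N, forall m n, (N <= m)%nat -> (N <= n)%nat ->
    dist (x m) (x n) < eps.

Definition complete : Prop :=
  forall x : nat -> X, cauchy_seq x ->
    exists p, forall eps, 0 < eps -> exists N, forall n, (N <= n)%nat -> dist (x n) p < eps.

End Defs.

Arguments cofinally_BQ_complete : clear implicits.
Arguments strongly_ULB : clear implicits.
Arguments complete : clear implicits.

Section Funs.
Context {X Y : MetricSpace}.

Definition lipschitz_on (f : X -> Y) (A : X -> Prop) : Prop :=
  exists K, forall a b, A a -> A b -> dist (f a) (f b) <= K * dist a b.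

Definition cauchy_lipschitz (f : X -> Y) : Prop :=
  forall x : nat -> X, cauchy_seq x -> lipschitz_on f (fun a => exists n, a = x n).

Definition cauchy_continuous (f : X -> Y) : Prop :=
  forall x : nat -> X, cauchy_seq x -> cauchy_seq (fun n => f (x n)).

Definition strongly_ULL (f : X -> Y) : Prop :=
  exists delta, 0 < delta /\ forall x, lipschitz_on f (chain_component x delta).

Definition isometry (i : X -> Y) : Prop :=
  forall a b, dist (i a) (i b) = dist a b.

Definition dense_range (i : X -> Y) : Prop :=
  forall y : Y, forall eps, 0 < eps -> exists a, dist (i a) y < eps.

Definition is_completion (i : X -> Y) : Prop :=
  complete Y /\ isometry i /\ dense_range i.
End Funs.

Definition SULL_uniformly_dense_in_CC (X : MetricSpace) : Prop :=
  forall g : X -> RealLine, cauchy_continuous g ->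
    forall eps, 0 < eps -> exists f : X -> RealLine, strongly_ULL f /\
      forall x, Rabs (f x - g x) <= eps.

(* If the completion is cofinally Bourbaki quasi-complete, any failure of uniformity on
   the small chain components of X (unboundedness, a blowing-up Lipschitz constant, an
   oscillation of size eps at small scales) yields "bad pairs" inside the
   1/(m+1)-component of some point, for every m.  Collected along a cofinally Bourbaki
   quasi-Cauchy sequence of the completion, they accumulate at a cluster point, giving a
   Cauchy sequence of X with bad pairs at all scales, which no Cauchy-Lipschitz or
   Cauchy-continuous function tolerates; on each component the uniform approximation is
   then McShane's inf-convolution.
   Conversely, a cofinally Bourbaki quasi-Cauchy sequence (z_n) of the completion without
   cluster point carries spikes of height n at z_n whose supremum is locally Lipschitz on
   the completion, hence Cauchy-Lipschitz on X, but unbounded on every small chain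
   component of X; a strongly uniformly locally Lipschitz function on a strongly
   uniformly locally bounded space is bounded there, so it cannot stay within 1 of it. *)

From Stdlib Require Import Reals Lra Lia.
From Stdlib Require Import Classical FunctionalExtensionality PropExtensionality IndefiniteDescription.
Open Scope R_scope.

Lemma dist_self {X : MetricSpace} (a : X) : dist a a = 0.
Proof. apply dist_eq0; reflexivity. Qed.

Section Chains.
Context {X : MetricSpace}.

Lemma chain_trans e (a b c : X) : chain e a b -> chain e b c -> chain e a c.
Proof. induction 1; intros; [assumption | eapply chain_step; eauto]. Qed.

Lemma chain_sym e (a b : X) : chain e a b -> chain e b a.
Proof.
  induction 1 as [|x y z Hxy _ IH]; [constructor|].
  apply chain_trans with y; [exact IH|].
  apply chain_step with x; [rewrite dist_sym; exact Hxy | constructor].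
Qed.

Lemma chain_weaken e e' (a b : X) : e <= e' -> chain e a b -> chain e' a b.
Proof.
  intros He. induction 1; [constructor|].
  apply chain_step with y; [lra | assumption].
Qed.

Lemma chain_component_eq d (x a : X) :
  chain d x a -> chain_component a d = chain_component x d.
Proof.
  intros Hxa. apply functional_extensionality; intros y.
  apply propositional_extensionality; split; intros H.
  - exact (chain_trans _ _ _ _ Hxa H).
  - exact (chain_trans _ _ _ _ (chain_sym _ _ _ Hxa) H).
Qed.

End Chains.

Lemma chain_isometry {X Y : MetricSpace} (i : X -> Y) e (a b : X) :
  isometry i -> chain e a b -> chain e (i a) (i b).
Proof.
  intros Hi. induction 1; [constructor|].
  apply chain_step with (i y); [rewrite Hi | ]; assumption.
Qed.

(* Perturb each intermediate point into the image of [i], within the slack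
   [e - dist] of its step. *)
Lemma chain_of_dense_isometry {X Y : MetricSpace} (i : X -> Y) e :
  isometry i -> dense_range i -> 0 < e ->
  forall z w, chain e z w -> exists eta, 0 < eta /\
    forall a b, dist (i a) z < eta -> dist (i b) w < eta -> chain e a b.
Proof.
  intros Hi Hd He z w H. induction H as [z|z y w Hzy _ [eta [Heta IH]]].
  - exists (e / 2). split; [lra|]. intros a b Ha Hb.
    apply chain_step with b; [|constructor].
    rewrite <- Hi. pose proof (dist_tri _ (i a) z (i b)).
    rewrite (dist_sym _ z (i b)) in *. lra.
  - set (s := Rmin eta ((e - dist z y) / 2)).
    assert (Hs : 0 < s) by (apply Rmin_glb_lt; lra).
    assert (Hs1 : s <= eta) by apply Rmin_l.
    assert (Hs2 : s <= (e - dist z y) / 2) by apply Rmin_r.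
    exists s. split; [exact Hs|]. intros a b Ha Hb.
    destruct (Hd y s Hs) as [c Hc].
    apply chain_step with c; [|apply IH; lra].
    rewrite <- Hi. pose proof (dist_tri _ (i a) z (i c)). pose proof (dist_tri _ z y (i c)).
    rewrite (dist_sym _ y (i c)) in *. lra.
Qed.

Lemma INR_unbounded_from (A : R) (N : nat) : exists n, (N <= n)%nat /\ A < INR n.
Proof.
  destruct (INR_unbounded A) as [n Hn]. exists (Nat.max N n). split; [lia|].
  pose proof (le_INR n (Nat.max N n) ltac:(lia)). lra.
Qed.

Lemma inv_INR_S_pos n : 0 < / INR (S n).
Proof. rewrite S_INR. apply RinvN_pos. Qed.

Lemma inv_INR_S_le m n : (m <= n)%nat -> / INR (S n) <= / INR (S m).
Proof. intros H. apply Rinv_le_contravar; [apply lt_0_INR; lia | apply le_INR; lia]. Qed.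

Lemma inv_INR_S_lt e : 0 < e -> exists m, / INR (S m) < e.
Proof.
  intros He. destruct (archimed_cor1 e He) as [N [HN HN0]].
  exists (N - 1)%nat. replace (S (N - 1)) with N by lia. exact HN.
Qed.

Section Sequences.
Context {X : MetricSpace}.

Definition converges_to (x : nat -> X) (p : X) : Prop :=
  forall eps, 0 < eps -> exists N, forall n, (N <= n)%nat -> dist (x n) p < eps.

Lemma cauchy_seq_of_converges_to (x : nat -> X) p : converges_to x p -> cauchy_seq x.
Proof.
  intros Hx eps Heps. destruct (Hx (eps / 2)) as [N HN]; [lra|].
  exists N. intros m n Hm Hn. specialize (HN m Hm) as Hm'. specialize (HN n Hn).
  pose proof (dist_tri _ (x m) p (x n)). rewrite (dist_sym _ p (x n)) in *. lra.
Qed.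

Lemma converges_to_of_dist_lt_inv (x : nat -> X) p :
  (forall n, dist (x n) p < / INR (S n)) -> converges_to x p.
Proof.
  intros Hx eps Heps. destruct (inv_INR_S_lt eps Heps) as [N HN].
  exists N. intros n Hn. specialize (Hx n). pose proof (inv_INR_S_le N n Hn). lra.
Qed.

Lemma converges_to_of_close (u v : nat -> X) p :
  converges_to u p -> (forall n, dist (v n) (u n) < / INR (S n)) -> converges_to v p.
Proof.
  intros Hu Hvu eps Heps. destruct (Hu (eps / 2)) as [N1 HN1]; [lra|].
  destruct (inv_INR_S_lt (eps / 2)) as [N2 HN2]; [lra|].
  exists (Nat.max N1 N2). intros n Hn.
  specialize (HN1 n ltac:(lia)). specialize (Hvu n).
  pose proof (inv_INR_S_le N2 n ltac:(lia)). pose proof (dist_tri _ (v n) (u n) p). lra.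
Qed.

Definition interleave (u v : nat -> X) (n : nat) : X :=
  if Nat.even n then u (Nat.div2 n) else v (Nat.div2 n).

Lemma interleave_even u v j : interleave u v (2 * j) = u j.
Proof. unfold interleave. rewrite Nat.even_mul, Nat.div2_double. reflexivity. Qed.

Lemma interleave_odd u v j : interleave u v (S (2 * j)) = v j.
Proof.
  unfold interleave. rewrite Nat.even_succ, Nat.odd_mul, Nat.div2_succ_double. reflexivity.
Qed.

Lemma converges_to_interleave u v p :
  converges_to u p -> converges_to v p -> converges_to (interleave u v) p.
Proof.
  intros Hu Hv eps Heps. destruct (Hu eps Heps) as [N1 HN1]. destruct (Hv eps Heps) as [N2 HN2].
  exists (2 * Nat.max N1 N2)%nat. intros n Hn. unfold interleave.
  assert (Nat.max N1 N2 <= Nat.div2 n)%nat.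
  { pose proof (Nat.div2_odd n). destruct (Nat.odd n); simpl in *; lia. }
  destruct (Nat.even n); [apply HN1 | apply HN2]; lia.
Qed.

Lemma cauchy_seq_bounded (x : nat -> X) :
  cauchy_seq x -> forall p, exists M, forall n, dist p (x n) <= M.
Proof.
  intros Hx p. destruct (Hx 1 Rlt_0_1) as [N HN].
  assert (Hinit : forall k, exists M, forall n, (n <= k)%nat -> dist p (x n) <= M).
  { induction k as [|k [M HM]].
    - exists (dist p (x 0%nat)). intros n Hn. replace n with 0%nat by lia. lra.
    - exists (Rmax M (dist p (x (S k)))). intros n Hn.
      destruct (Nat.eq_dec n (S k)) as [->|]; [apply Rmax_r|].
      eapply Rle_trans; [apply HM; lia | apply Rmax_l]. }
  destruct (Hinit N) as [M HM]. exists (M + 1). intros n.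
  destruct (Nat.le_gt_cases n N) as [Hn|Hn]; [specialize (HM n Hn); lra|].
  specialize (HN N n (le_n N) ltac:(lia)). specialize (HM N (le_n N)).
  pose proof (dist_tri _ p (x N) (x n)). lra.
Qed.

Lemma cluster_point_subseq (x : nat -> X) p : cluster_point x p ->
  exists tau : nat -> nat, forall j, (j <= tau j)%nat /\ dist (x (tau j)) p < / INR (S j).
Proof.
  intros Hp.
  apply (functional_choice (fun j n => (j <= n)%nat /\ dist (x n) p < / INR (S j))).
  intros j. exact (Hp _ (inv_INR_S_pos j) j).
Qed.

End Sequences.

Lemma cauchy_seq_isometry {X Y : MetricSpace} (i : X -> Y) (x : nat -> X) :
  isometry i -> cauchy_seq (fun n => i (x n)) <-> cauchy_seq x.
Proof.
  intros Hi. split; intros H eps Heps; destruct (H eps Heps) as [N HN];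
    exists N; intros m n Hm Hn; specialize (HN m n Hm Hn); rewrite ?Hi in *; exact HN.
Qed.
Section Lipschitz.
Context {X Y : MetricSpace}.

Lemma affine_bound_of_local_bound (f : X -> Y) (A : X -> Prop) (e L B r : R) :
  0 <= e -> 0 < r ->
  (forall a b, A a -> A b -> dist a b < r -> dist (f a) (f b) <= e + L * dist a b) ->
  (forall a b, A a -> A b -> dist (f a) (f b) <= B) ->
  exists K, 0 <= K /\ forall a b, A a -> A b -> dist (f a) (f b) <= e + K * dist a b.
Proof.
  intros He Hr Hloc Hbnd.
  set (K := Rmax (Rmax 0 L) (Rmax 0 B / r)).
  assert (HK0 : 0 <= K) by (eapply Rle_trans; [apply Rmax_l | apply Rmax_l]).
  assert (HKL : L <= K) by (eapply Rle_trans; [apply Rmax_r | apply Rmax_l]).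
  assert (HKB : Rmax 0 B / r <= K) by apply Rmax_r.
  exists K. split; [exact HK0|]. intros a b Ha Hb. pose proof (dist_ge0 _ a b) as Hd.
  destruct (Rlt_le_dec (dist a b) r) as [Hlt|Hge].
  - specialize (Hloc a b Ha Hb Hlt).
    assert (L * dist a b <= K * dist a b) by (apply Rmult_le_compat_r; lra). lra.
  - specialize (Hbnd a b Ha Hb). pose proof (Rmax_r 0 B). pose proof (Rmax_l 0 B).
    assert (Rmax 0 B / r * r <= K * dist a b).
    { apply Rmult_le_compat; [| lra | exact HKB | exact Hge].
      apply Rmult_le_pos; [lra | left; apply Rinv_0_lt_compat; lra]. }
    replace (Rmax 0 B / r * r) with (Rmax 0 B) in * by (field; lra). lra.
Qed.

Lemma lipschitz_on_bounded_image (f : X -> Y) (A : X -> Prop) :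
  bounded_set A -> lipschitz_on f A ->
  forall a0, A a0 -> exists M, forall a, A a -> dist (f a0) (f a) <= M.
Proof.
  intros [c [R HR]] [K HK] a0 Ha0. exists (Rabs K * (2 * R)). intros a Ha.
  specialize (HK a0 a Ha0 Ha). pose proof (HR a Ha). pose proof (HR a0 Ha0).
  pose proof (dist_tri _ a0 c a). rewrite (dist_sym _ a0 c) in *.
  pose proof (dist_ge0 _ a0 a). pose proof (Rle_abs K). pose proof (Rabs_pos K).
  assert (K * dist a0 a <= Rabs K * (2 * R)) by nra. lra.
Qed.

Lemma cauchy_lipschitz_cauchy_continuous (f : X -> Y) : cauchy_lipschitz f -> cauchy_continuous f.
Proof.
  intros Hf x Hx eps Heps. destruct (Hf x Hx) as [K HK]. pose proof (Rabs_pos K).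
  destruct (Hx (eps / (Rabs K + 1))) as [N HN]; [apply Rdiv_lt_0_compat; lra|].
  exists N. intros m n Hm Hn. specialize (HN m n Hm Hn).
  specialize (HK (x m) (x n) (ex_intro _ m eq_refl) (ex_intro _ n eq_refl)).
  pose proof (dist_ge0 _ (x m) (x n)). pose proof (Rle_abs K).
  assert (Rabs K * dist (x m) (x n) <= Rabs K * (eps / (Rabs K + 1)))
    by (apply Rmult_le_compat_l; lra).
  assert (Rabs K * (eps / (Rabs K + 1)) < eps)
    by (apply Rmult_lt_reg_r with (Rabs K + 1); [lra | field_simplify; lra]).
  nra.
Qed.

End Lipschitz.

Lemma glb_exists (E : R -> Prop) (l : R) : (forall e, E e -> l <= e) -> (exists e, E e) ->
  exists m, (forall e, E e -> m <= e) /\ (forall l', (forall e, E e -> l' <= e) -> l' <= m).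
Proof.
  intros Hl [e0 He0].
  destruct (completeness (fun v => E (- v))) as [s [Hs1 Hs2]].
  - exists (- l). intros v Hv. specialize (Hl _ Hv). lra.
  - exists (- e0). rewrite Ropp_involutive. exact He0.
  - exists (- s). split.
    + intros e He. assert (- e <= s) by (apply Hs1; rewrite Ropp_involutive; exact He). lra.
    + intros l' Hl'.
      assert (s <= - l') by (apply Hs2; intros v Hv; specialize (Hl' _ Hv); lra). lra.
Qed.

(* McShane's inf-convolution [h a = inf_{y in A} g y + k dist a y]. *)
Lemma lipschitz_approx_on {X : MetricSpace} (A : X -> Prop) (g : X -> R) (e k : R) :
  0 <= k -> (forall a b, A a -> A b -> Rabs (g a - g b) <= e + k * dist a b) ->
  exists h : X -> R, (forall a b, A a -> A b -> Rabs (h a - h b) <= k * dist a b) /\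
    forall a, A a -> Rabs (h a - g a) <= e.
Proof.
  intros Hk Hg.
  set (E a v := exists y, A y /\ v = g y + k * dist a y).
  assert (Hlow : forall a v, A a -> E a v -> g a - e <= v).
  { intros a v Ha [y [Hy ->]]. specialize (Hg a y Ha Hy).
    pose proof (Rle_abs (g a - g y)). lra. }
  assert (Hinf : forall a, exists m, A a ->
    (forall v, E a v -> m <= v) /\ (forall l, (forall v, E a v -> l <= v) -> l <= m)).
  { intros a. destruct (classic (A a)) as [Ha|Ha]; [|exists 0; tauto].
    destruct (glb_exists (E a) (g a - e)) as [m Hm].
    - intros v. exact (Hlow a v Ha).
    - exists (g a + k * dist a a), a. split; [exact Ha | reflexivity].
    - exists m. intros _. exact Hm. }
  destruct (functional_choice _ Hinf) as [h Hh].
  assert (Hone : forall a b, A a -> A b -> h b <= h a + k * dist a b).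
  { intros a b Ha Hb.
    enough (h b - k * dist a b <= h a) by lra.
    apply (proj2 (Hh a Ha)). intros v [y [Hy ->]].
    pose proof (proj1 (Hh b Hb) (g y + k * dist b y) (ex_intro _ y (conj Hy eq_refl))).
    pose proof (dist_tri _ b a y). rewrite (dist_sym _ b a) in *.
    assert (k * dist b y <= k * (dist a b + dist a y)) by (apply Rmult_le_compat_l; lra). lra. }
  exists h. split.
  - intros a b Ha Hb. pose proof (Hone a b Ha Hb). pose proof (Hone b a Hb Ha).
    rewrite (dist_sym _ b a) in *. apply Rabs_le. lra.
  - intros a Ha.
    assert (He : 0 <= e).
    { specialize (Hg a a Ha Ha). rewrite Rminus_diag, Rabs_R0, dist_self in Hg. lra. }
    apply Rabs_le. split.
    + enough (g a - e <= h a) by lra. apply (proj2 (Hh a Ha)). intros v. exact (Hlow a v Ha).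
    + enough (h a <= g a) by lra.
      pose proof (proj1 (Hh a Ha) (g a + k * dist a a) (ex_intro _ a (conj Ha eq_refl))).
      rewrite dist_self, Rmult_0_r, Rplus_0_r in *. assumption.
Qed.
Lemma uniform_delta_of_point {X : Type} (P : R -> X -> Prop) :
  (X -> exists d, 0 < d /\ forall x, P d x) -> exists d, 0 < d /\ forall x, P d x.
Proof.
  intros H. destruct (classic (inhabited X)) as [[x]|HX]; [exact (H x)|].
  exists 1. split; [lra|]. intros x. exfalso. exact (HX (inhabits x)).
Qed.

Definition sqrt_rem (n : nat) : nat := n - Nat.sqrt n * Nat.sqrt n.

Lemma sqrt_rem_infinitely_often (m N : nat) : exists n, (N <= n)%nat /\ sqrt_rem n = m.
Proof.
  set (k := (m + N)%nat). exists (k * k + m)%nat. split; [nia|].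
  unfold sqrt_rem. rewrite (Nat.sqrt_unique (k * k + m) k); [lia | nia].
Qed.

Section CofinallyBourbakiQuasiComplete.
Context {X Xh : MetricSpace} (i : X -> Xh).
Hypothesis i_isometry : isometry i.
Hypothesis Xh_cBQC : cofinally_BQ_complete Xh.

(* Enumerate all pairs (a_{m,t}, b_{m,t}) along [sqrt_rem], which returns to every
   centre [m] infinitely often: the a's then form a cofinally Bourbaki quasi-Cauchy
   sequence of the completion, and a subsequence converging to one of its cluster
   points yields the Cauchy sequence. *)
Lemma bad_pairs_along_cauchy_seq (Bad : nat -> X -> X -> Prop) :
  (forall t a b, Bad t a b -> dist a b < / INR (S t)) ->
  (forall m, exists x, forall t, exists a b,
     chain (/ INR (S m)) x a /\ chain (/ INR (S m)) x b /\ Bad t a b) ->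
  exists u v : nat -> X, cauchy_seq (interleave u v) /\
    forall j, exists t, (j <= t)%nat /\ Bad t (u j) (v j).
Proof.
  intros Bad_close Hbad.
  destruct (functional_choice _ Hbad) as [x Hx].
  assert (Hab : forall mt : nat * nat, exists ab : X * X,
    chain (/ INR (S (fst mt))) (x (fst mt)) (fst ab) /\
    chain (/ INR (S (fst mt))) (x (fst mt)) (snd ab) /\ Bad (snd mt) (fst ab) (snd ab)).
  { intros [m t]. destruct (Hx m t) as [a [b H]]. exists (a, b). exact H. }
  clear Hbad Hx. destruct (functional_choice _ Hab) as [ab Hab']. clear Hab.
  set (a n := fst (ab (sqrt_rem n, n))).
  assert (Ha : cofinally_BQC (fun n => i (a n))).
  { intros eps Heps. destruct (inv_INR_S_lt eps Heps) as [m Hm].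
    exists (fun n => sqrt_rem n = m). split.
    - intros N. exact (sqrt_rem_infinitely_often m N).
    - intros j k Hj Hk. apply chain_weaken with (/ INR (S m)); [lra|].
      apply chain_isometry; [exact i_isometry|]. unfold a. rewrite Hj, Hk.
      destruct (Hab' (m, j)) as [Hj' _]. destruct (Hab' (m, k)) as [Hk' _].
      exact (chain_trans _ _ _ _ (chain_sym _ _ _ Hj') Hk'). }
  destruct (Xh_cBQC _ Ha) as [p Hp].
  destruct (cluster_point_subseq _ _ Hp) as [tau Htau].
  set (u j := a (tau j)). set (v j := snd (ab (sqrt_rem (tau j), tau j))).
  assert (Huv : forall j, Bad (tau j) (u j) (v j)) by (intros j; apply (Hab' (_, _))).
  exists u, v. split.
  - apply (cauchy_seq_isometry i _ i_isometry).
    replace (fun n => i (interleave u v n))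
      with (interleave (fun j => i (u j)) (fun j => i (v j)))
      by (apply functional_extensionality; intros n; unfold interleave; now destruct (Nat.even n)).
    apply cauchy_seq_of_converges_to with p.
    assert (Hu : converges_to (fun j => i (u j)) p)
      by (apply converges_to_of_dist_lt_inv; intros j; apply Htau).
    apply converges_to_interleave; [exact Hu|].
    apply converges_to_of_close with (fun j => i (u j)); [exact Hu|].
    intros j. rewrite i_isometry, dist_sym.
    eapply Rlt_le_trans; [apply Bad_close, Huv | apply inv_INR_S_le, Htau].
  - intros j. exists (tau j). split; [apply Htau | apply Huv].
Qed.

Lemma uniform_on_small_chain_components (Bad : nat -> X -> X -> Prop) :
  (forall t a b, Bad t a b -> dist a b < / INR (S t)) ->
  (forall u v, cauchy_seq (interleave u v) ->
     exists j, forall t, (j <= t)%nat -> ~ Bad t (u j) (v j)) ->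
  exists d, 0 < d /\ forall x, exists t, forall a b, chain d x a -> chain d x b -> ~ Bad t a b.
Proof.
  intros Bad_close Hcauchy. apply NNPP. intros Hnot.
  destruct (bad_pairs_along_cauchy_seq Bad Bad_close) as [u [v [Hw Hbad]]].
  - intros m. apply NNPP. intros Hm. apply Hnot.
    exists (/ INR (S m)). split; [apply inv_INR_S_pos|]. intros x.
    apply NNPP. intros Hx. apply Hm. exists x. intros t.
    apply NNPP. intros Ht. apply Hx. exists t. intros a b Ha Hb HB. apply Ht. exists a, b. auto.
  - destruct (Hcauchy u v Hw) as [j Hj]. destruct (Hbad j) as [t [Ht HB]]. exact (Hj t Ht HB).
Qed.

Lemma strongly_ULB_of_cBQC : strongly_ULB X.
Proof.
  apply (uniform_delta_of_point (fun d x => bounded_set (chain_component x d))). intros xs.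
  destruct (uniform_on_small_chain_components (fun t a b => a = b /\ INR t < dist xs a))
    as [d [Hd Hx]].
  - intros t a b [<- _]. rewrite dist_self. apply inv_INR_S_pos.
  - intros u v Hw. destruct (cauchy_seq_bounded _ Hw xs) as [M HM].
    destruct (INR_unbounded M) as [j Hj]. exists j. intros t Hjt [_ Ht].
    specialize (HM (2 * j)%nat). rewrite interleave_even in HM.
    pose proof (le_INR _ _ Hjt). lra.
  - exists d. split; [exact Hd|]. intros x. destruct (Hx x) as [t Ht].
    exists xs, (INR t). intros a Ha. apply Rnot_lt_le. intros Hlt.
    exact (Ht a a Ha Ha (conj eq_refl Hlt)).
Qed.

Lemma strongly_ULL_of_cBQC (Y : MetricSpace) (f : X -> Y) : cauchy_lipschitz f -> strongly_ULL f.
Proof.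
  intros Hf. apply (uniform_delta_of_point (fun d x => lipschitz_on f (chain_component x d))).
  intros xs.
  destruct (uniform_on_small_chain_components (fun t a b => dist a b < / INR (S t) /\
    (INR (S t) * dist a b < dist (f a) (f b) \/ INR t < dist (f a) (f xs)))) as [d [Hd Hx]].
  - intros t a b [H _]. exact H.
  - intros u v Hw. destruct (Hf _ Hw) as [K HK].
    destruct (cauchy_seq_bounded _ (cauchy_lipschitz_cauchy_continuous f Hf _ Hw) (f xs)) as [M HM].
    destruct (INR_unbounded (Rmax K M)) as [j Hj]. exists j. intros t Hjt [_ [Hlip|Hbig]].
    + specialize (HK _ _ (ex_intro _ (2 * j)%nat eq_refl) (ex_intro _ (S (2 * j)) eq_refl)).
      rewrite interleave_even, interleave_odd in HK.
      pose proof (Rmax_l K M). pose proof (le_INR _ _ Hjt). rewrite S_INR in Hlip.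
      pose proof (dist_ge0 _ (u j) (v j)).
      assert (K * dist (u j) (v j) <= (INR t + 1) * dist (u j) (v j))
        by (apply Rmult_le_compat_r; lra). lra.
    + specialize (HM (2 * j)%nat). rewrite interleave_even, dist_sym in HM.
      pose proof (Rmax_r K M). pose proof (le_INR _ _ Hjt). lra.
  - exists d. split; [exact Hd|]. intros x. destruct (Hx x) as [t Ht].
    assert (Hr : 0 < / INR (S t)) by apply inv_INR_S_pos.
    assert (Hbnd : forall a, chain d x a -> dist (f a) (f xs) <= INR t).
    { intros a Ha. apply Rnot_lt_le. intros Hlt. apply (Ht a a Ha Ha).
      rewrite dist_self. split; [exact Hr | right; exact Hlt]. }
    destruct (affine_bound_of_local_bound f (chain_component x d) 0 (INR (S t)) (2 * INR t) _
      (Rle_refl 0) Hr) as [K [_ HK]].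
    + intros a b Ha Hb Hab. apply Rnot_lt_le. intros Hlt. apply (Ht a b Ha Hb).
      split; [exact Hab | left; lra].
    + intros a b Ha Hb. pose proof (Hbnd a Ha). pose proof (Hbnd b Hb).
      pose proof (dist_tri _ (f a) (f xs) (f b)). rewrite (dist_sym _ (f xs)) in *. lra.
    + exists K. intros a b Ha Hb. rewrite <- (Rplus_0_l (K * dist a b)). exact (HK a b Ha Hb).
Qed.

Lemma approx_lipschitz_on_chain_components (g : X -> RealLine) (eps : R) :
  cauchy_continuous g -> 0 < eps ->
  exists d, 0 < d /\ forall x, exists k, 0 <= k /\
    forall a b, chain d x a -> chain d x b -> Rabs (g a - g b) <= eps + k * dist a b.
Proof.
  intros Hg Heps.
  destruct (uniform_on_small_chain_components (fun t a b => dist a b < / INR (S t) /\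
    (eps < Rabs (g a - g b) \/ INR t < Rabs (g a)))) as [d [Hd Hx]].
  - intros t a b [H _]. exact H.
  - intros u v Hw. specialize (Hg _ Hw).
    destruct (Hg eps Heps) as [N HN]. destruct (cauchy_seq_bounded _ Hg (0 : RealLine)) as [M HM].
    destruct (INR_unbounded_from M N) as [j [HNj Hj]]. exists j. intros t Hjt [_ [Hosc|Hbig]].
    + specialize (HN (2 * j)%nat (S (2 * j)) ltac:(lia) ltac:(lia)).
      rewrite interleave_even, interleave_odd in HN. simpl in HN. lra.
    + specialize (HM (2 * j)%nat). rewrite interleave_even in HM. simpl in HM.
      rewrite Rminus_0_l, Rabs_Ropp in HM. pose proof (le_INR _ _ Hjt). lra.
  - exists d. split; [exact Hd|]. intros x. destruct (Hx x) as [t Ht].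
    assert (Hr : 0 < / INR (S t)) by apply inv_INR_S_pos.
    assert (Hbnd : forall a, chain d x a -> Rabs (g a) <= INR t).
    { intros a Ha. apply Rnot_lt_le. intros Hlt. apply (Ht a a Ha Ha).
      rewrite dist_self. split; [exact Hr | right; exact Hlt]. }
    destruct (affine_bound_of_local_bound g (chain_component x d) eps 0 (2 * INR t) _
      (Rlt_le _ _ Heps) Hr) as [K [HK0 HK]].
    + intros a b Ha Hb Hab. rewrite Rmult_0_l, Rplus_0_r.
      apply Rnot_lt_le. intros Hlt. apply (Ht a b Ha Hb). split; [exact Hab | left; exact Hlt].
    + intros a b Ha Hb. pose proof (Hbnd a Ha). pose proof (Hbnd b Hb).
      pose proof (Rabs_triang (g a) (- g b)). rewrite Rabs_Ropp in *.
      change (Rabs (g a - g b) <= 2 * INR t). unfold Rminus. lra.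
    + exists K. split; [exact HK0 | exact HK].
Qed.

Lemma SULL_uniformly_dense_of_cBQC : SULL_uniformly_dense_in_CC X.
Proof.
  intros g Hg eps Heps.
  destruct (approx_lipschitz_on_chain_components g eps Hg Heps) as [d [Hd Happrox]].
  assert (Hpiece : forall C : X -> Prop, exists hC : X -> R, forall x, C = chain_component x d ->
    lipschitz_on (hC : X -> RealLine) C /\ forall a, C a -> Rabs (hC a - g a) <= eps).
  { intros C. destruct (classic (exists x, C = chain_component x d)) as [[x ->]|HC].
    - destruct (Happrox x) as [k [Hk Hx]].
      destruct (lipschitz_approx_on (chain_component x d) g eps k Hk Hx) as [h [Hh1 Hh2]].
      exists h. intros _ _. split; [exists k; exact Hh1 | exact Hh2].
    - exists g. intros x Hx. exfalso. exact (HC (ex_intro _ x Hx)). }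
  destruct (functional_choice _ Hpiece) as [h Hh].
  exists (fun x => h (chain_component x d) x). split.
  - exists d. split; [exact Hd|]. intros x. destruct (Hh _ x eq_refl) as [[k Hk] _].
    exists k. intros a b Ha Hb. cbv beta.
    rewrite (chain_component_eq d x a Ha), (chain_component_eq d x b Hb). exact (Hk a b Ha Hb).
  - intros x. destruct (Hh _ x eq_refl) as [_ Hx]. exact (Hx x (chain_refl _ x)).
Qed.

End CofinallyBourbakiQuasiComplete.
Fixpoint max_upto (h : nat -> R) (M : nat) : R :=
  match M with
  | O => h O
  | S M' => Rmax (max_upto h M') (h M)
  end.

Lemma max_upto_ge (h : nat -> R) M n : (n <= M)%nat -> h n <= max_upto h M.
Proof.
  induction M as [|M IH]; intros Hn; simpl.
  - replace n with 0%nat by lia. lra.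
  - destruct (Nat.eq_dec n (S M)) as [->|]; [apply Rmax_r|].
    eapply Rle_trans; [apply IH; lia | apply Rmax_l].
Qed.

Lemma max_upto_stable (h : nat -> R) M M' : (forall n, 0 <= h n) ->
  (forall n, (M < n)%nat -> h n = 0) -> (M <= M')%nat -> max_upto h M' = max_upto h M.
Proof.
  intros H0 Hz Hle. induction Hle as [|M' Hle IH]; [reflexivity|].
  simpl. rewrite Hz, IH by lia. apply Rmax_left.
  eapply Rle_trans; [apply (H0 0%nat) | apply max_upto_ge; lia].
Qed.

Lemma Rabs_Rmax_sub_le a b c d e :
  Rabs (a - c) <= e -> Rabs (b - d) <= e -> Rabs (Rmax a b - Rmax c d) <= e.
Proof.
  unfold Rmax. destruct (Rle_dec a b), (Rle_dec c d);
    unfold Rabs; repeat destruct Rcase_abs; lra.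
Qed.

Lemma max_upto_sub_le (h1 h2 : nat -> R) M e :
  (forall n, (n <= M)%nat -> Rabs (h1 n - h2 n) <= e) -> Rabs (max_upto h1 M - max_upto h2 M) <= e.
Proof.
  induction M as [|M IH]; intros H; simpl; [apply H; lia|].
  apply Rabs_Rmax_sub_le; [apply IH; intros; apply H | apply H]; lia.
Qed.

Lemma finite_pos_lower_bound (rho : nat -> R) N :
  (forall n, 0 < rho n) -> exists r, 0 < r /\ forall n, (n <= N)%nat -> r <= rho n.
Proof.
  intros Hrho. induction N as [|N [r [Hr HN]]].
  - exists (rho 0%nat). split; [apply Hrho|]. intros n Hn. replace n with 0%nat by lia. lra.
  - exists (Rmin r (rho (S N))). split; [apply Rmin_glb_lt; auto|]. intros n Hn.
    destruct (Nat.eq_dec n (S N)) as [->|]; [apply Rmin_r|].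
    eapply Rle_trans; [apply Rmin_l | apply HN; lia].
Qed.

Definition locally_lipschitz {X Y : MetricSpace} (F : X -> Y) : Prop :=
  forall q, exists rho, 0 < rho /\ lipschitz_on F (fun a => dist a q < rho).

(* The range of a Cauchy sequence of [X] is its limit in the completion plus finitely
   many points, so a locally Lipschitz map is uniformly locally Lipschitz and bounded
   on it. *)
Lemma cauchy_lipschitz_of_locally_lipschitz {X Xh Y : MetricSpace} (i : X -> Xh) (F : Xh -> Y) :
  complete Xh -> isometry i -> locally_lipschitz F -> cauchy_lipschitz (fun x => F (i x)).
Proof.
  intros Hc Hi HF x Hx.
  destruct (functional_choice _ HF) as [rho Hrho].
  assert (HL : forall q, exists L, forall a b, dist a q < rho q -> dist b q < rho q ->
    dist (F a) (F b) <= L * dist a b) by (intros q; exact (proj2 (Hrho q))).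
  destruct (functional_choice _ HL) as [L HL']. clear HL.
  destruct (Hc _ (proj2 (cauchy_seq_isometry i x Hi) Hx)) as [p Hp].
  destruct (Hp (rho p) (proj1 (Hrho p))) as [N HN].
  destruct (finite_pos_lower_bound (fun m => rho (i (x m))) N) as [r [Hr Hrle]];
    [intros m; apply Hrho|].
  set (Lmax := Rmax (L p) (max_upto (fun m => L (i (x m))) N)).
  set (B := Rmax (Rabs (L p) * rho p) (max_upto (fun m => dist (F (i (x m))) (F p)) N)).
  assert (Hnear : forall m n, (m <= N)%nat -> dist (x m) (x n) < r ->
    dist (F (i (x m))) (F (i (x n))) <= Lmax * dist (x m) (x n)).
  { intros m n Hm Hmn. specialize (Hrle m Hm).
    assert (L (i (x m)) <= Lmax)
      by (eapply Rle_trans; [apply (max_upto_ge (fun m => L (i (x m)))), Hm | apply Rmax_r]).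
    rewrite <- Hi. eapply Rle_trans.
    - apply HL'; rewrite ?dist_self; [apply Hrho | rewrite dist_sym, Hi; lra].
    - apply Rmult_le_compat_r; [apply dist_ge0 | assumption]. }
  assert (Hbnd : forall n, dist (F (i (x n))) (F p) <= B).
  { intros n. destruct (Nat.le_gt_cases n N) as [Hn|Hn].
    - eapply Rle_trans; [| apply Rmax_r].
      exact (max_upto_ge (fun m => dist (F (i (x m))) (F p)) _ _ Hn).
    - eapply Rle_trans; [| apply Rmax_l]. specialize (HN n ltac:(lia)).
      eapply Rle_trans; [apply HL'; [exact HN | rewrite dist_self; apply Hrho]|].
      pose proof (dist_ge0 _ (i (x n)) p). pose proof (Rle_abs (L p)). pose proof (Rabs_pos (L p)).
      nra. }
  destruct (affine_bound_of_local_bound (fun x => F (i x)) (fun a => exists n, a = x n)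
    0 Lmax (2 * B) r (Rle_refl 0) Hr) as [K [_ HK]].
  - intros a b [m ->] [n ->] Hmn. rewrite Rplus_0_l.
    destruct (Nat.le_gt_cases m N) as [Hm|Hm]; [exact (Hnear m n Hm Hmn)|].
    destruct (Nat.le_gt_cases n N) as [Hn|Hn].
    + rewrite dist_sym, (dist_sym _ (x m)). apply Hnear; [exact Hn | rewrite dist_sym; exact Hmn].
    + rewrite <- Hi. eapply Rle_trans; [apply HL'; apply HN; lia|].
      apply Rmult_le_compat_r; [apply dist_ge0 | apply Rmax_l].
  - intros a b [m ->] [n ->]. pose proof (Hbnd m). pose proof (Hbnd n).
    pose proof (dist_tri _ (F (i (x m))) (F p) (F (i (x n)))). rewrite (dist_sym _ (F p)) in *. lra.
  - exists K. intros a b Ha Hb. rewrite <- (Rplus_0_l (K * dist a b)). exact (HK a b Ha Hb).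
Qed.

Lemma locally_lipschitz_sup {X : MetricSpace} (phi : nat -> X -> R) (c : nat -> R) :
  (forall n q, 0 <= phi n q) ->
  (forall n q q', Rabs (phi n q - phi n q') <= c n * dist q q') ->
  (forall q, exists rho M, 0 < rho /\
     forall q', dist q' q < rho -> forall n, (M < n)%nat -> phi n q' = 0) ->
  exists F : X -> RealLine, locally_lipschitz F /\ forall n q, phi n q <= F q.
Proof.
  intros Hphi0 Hphic Hfin.
  assert (Hsupp : forall q, exists M, forall n, (M < n)%nat -> phi n q = 0).
  { intros q. destruct (Hfin q) as [rho [M [Hrho HM]]].
    exists M. apply HM. rewrite dist_self. exact Hrho. }
  destruct (functional_choice _ Hsupp) as [Mq HMq].
  exists (fun q => max_upto (fun n => phi n q) (Mq q)). split.
  - intros q. destruct (Hfin q) as [rho [M [Hrho HM]]]. exists rho. split; [exact Hrho|].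
    exists (max_upto c M). intros a b Ha Hb.
    assert (HFM : forall a, dist a q < rho ->
      max_upto (fun n => phi n a) (Mq a) = max_upto (fun n => phi n a) M).
    { intros a' Ha'.
      rewrite <- (max_upto_stable (fun n => phi n a') (Mq a') (Nat.max (Mq a') M)); auto; [|lia].
      apply max_upto_stable; auto; lia. }
    change (Rabs (max_upto (fun n => phi n a) (Mq a) - max_upto (fun n => phi n b) (Mq b))
      <= max_upto c M * dist a b).
    rewrite (HFM a Ha), (HFM b Hb). apply max_upto_sub_le. intros n Hn.
    eapply Rle_trans; [apply Hphic|].
    apply Rmult_le_compat_r; [apply dist_ge0 | apply max_upto_ge, Hn].
  - intros n q. destruct (Nat.le_gt_cases n (Mq q)) as [Hn|Hn].
    + exact (max_upto_ge (fun n => phi n q) _ _ Hn).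
    + rewrite HMq by exact Hn.
      eapply Rle_trans; [apply (Hphi0 0%nat q) | apply (max_upto_ge (fun n => phi n q)); lia].
Qed.

Definition bump {X : MetricSpace} (c : X) (n : nat) (q : X) : R :=
  INR n * Rmax 0 (1 - INR (S n) * dist q c).

Section Bumps.
Context {X : MetricSpace} (c : X) (n : nat).

Lemma bump_ge0 q : 0 <= bump c n q.
Proof. apply Rmult_le_pos; [apply pos_INR | apply Rmax_l]. Qed.

Lemma bump_eq0 q : / INR (S n) <= dist q c -> bump c n q = 0.
Proof.
  intros Hq. unfold bump. pose proof (lt_0_INR (S n) ltac:(lia)).
  assert (1 <= INR (S n) * dist q c).
  { apply Rmult_le_compat_l with (r := INR (S n)) in Hq; [|lra]. rewrite Rinv_r in Hq; lra. }
  rewrite Rmax_left by lra. ring.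
Qed.

Lemma bump_lipschitz q q' : Rabs (bump c n q - bump c n q') <= INR n * INR (S n) * dist q q'.
Proof.
  unfold bump. rewrite <- Rmult_minus_distr_l, Rabs_mult, Rabs_right by (apply Rle_ge, pos_INR).
  rewrite Rmult_assoc. apply Rmult_le_compat_l; [apply pos_INR|].
  pose proof (lt_0_INR (S n) ltac:(lia)). pose proof (dist_ge0 _ q q').
  apply Rabs_Rmax_sub_le; [rewrite Rminus_diag, Rabs_R0; apply Rmult_le_pos; lra|].
  pose proof (dist_tri _ q q' c). pose proof (dist_tri _ q' q c). rewrite (dist_sym _ q' q) in *.
  replace (1 - INR (S n) * dist q c - (1 - INR (S n) * dist q' c))
    with (INR (S n) * (dist q' c - dist q c)) by ring.
  rewrite Rabs_mult, Rabs_right by lra. apply Rmult_le_compat_l; [lra|].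
  apply Rabs_le. lra.
Qed.

Lemma bump_near_center q : dist q c <= / INR (S n) / 2 -> INR n / 2 <= bump c n q.
Proof.
  intros Hq. unfold bump. pose proof (lt_0_INR (S n) ltac:(lia)).
  assert (INR (S n) * dist q c <= 1 / 2).
  { apply Rmult_le_compat_l with (r := INR (S n)) in Hq; [|lra].
    replace (INR (S n) * (/ INR (S n) / 2)) with (1 / 2) in Hq by (field; lra). exact Hq. }
  pose proof (Rmax_r 0 (1 - INR (S n) * dist q c)). pose proof (pos_INR n).
  assert (INR n * (1 / 2) <= INR n * Rmax 0 (1 - INR (S n) * dist q c))
    by (apply Rmult_le_compat_l; lra). lra.
Qed.

End Bumps.

Lemma not_cBQC_no_cluster (Xh : MetricSpace) : ~ cofinally_BQ_complete Xh ->
  exists z : nat -> Xh, cofinally_BQC z /\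
    forall q, exists e m, 0 < e /\ forall n, (m <= n)%nat -> e <= dist (z n) q.
Proof.
  intros H. apply NNPP. intros H1. apply H. intros z Hz. apply NNPP. intros H2. apply H1.
  exists z. split; [exact Hz|]. intros q. apply NNPP. intros H3. apply H2. exists q.
  intros e He m. apply NNPP. intros H4. apply H3. exists e, m. split; [exact He|].
  intros n Hn. apply Rnot_lt_le. intros Hlt. apply H4. exists n. auto.
Qed.

Definition unbounded_on_chain_components {X : MetricSpace} (f : X -> R) : Prop :=
  forall d, 0 < d -> exists x0, forall M, exists a, chain d x0 a /\ M < f a.

Lemma unbounded_cauchy_lipschitz_of_not_cBQC {X Xh : MetricSpace} (i : X -> Xh) :
  is_completion i -> ~ cofinally_BQ_complete Xh ->
  exists f : X -> RealLine, cauchy_lipschitz f /\ unbounded_on_chain_components f.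
Proof.
  intros [Hc [Hi Hd]] HnP. destruct (not_cBQC_no_cluster Xh HnP) as [z [Hz Hnc]].
  destruct (locally_lipschitz_sup (fun n => bump (z n) n) (fun n => INR n * INR (S n)))
    as [F [HF HFge]].
  - intros n q. apply bump_ge0.
  - intros n q q'. apply bump_lipschitz.
  - intros q. destruct (Hnc q) as [e [m [He Hm]]].
    destruct (inv_INR_S_lt (e / 2)) as [K HK]; [lra|].
    exists (e / 2), (Nat.max m K). split; [lra|]. intros q' Hq' n Hn. apply bump_eq0.
    specialize (Hm n ltac:(lia)). pose proof (inv_INR_S_le K n ltac:(lia)).
    pose proof (dist_tri _ (z n) q' q). rewrite (dist_sym _ (z n) q') in *. lra.
  - exists (fun x => F (i x)). split; [exact (cauchy_lipschitz_of_locally_lipschitz i F Hc Hi HF)|].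
    intros d Hdp. destruct (Hz d Hdp) as [N [HNinf HN]].
    destruct (HNinf 0%nat) as [n0 [_ Hn0]]. destruct (Hd (z n0) d Hdp) as [x0 Hx0].
    exists x0. intros M. destruct (INR_unbounded (2 * M)) as [m Hm].
    destruct (HNinf m) as [n [Hmn Hn]].
    assert (Hch : chain d (i x0) (z n))
      by (apply chain_step with (z n0); [exact Hx0 | apply HN; auto]).
    destruct (chain_of_dense_isometry i d Hi Hd Hdp _ _ Hch) as [eta [Heta Hlift]].
    assert (Hs : 0 < Rmin eta (/ INR (S n) / 2))
      by (apply Rmin_glb_lt; [exact Heta | pose proof (inv_INR_S_pos n); lra]).
    destruct (Hd (z n) _ Hs) as [a Ha]. exists a. split.
    + apply Hlift; [rewrite dist_self; exact Heta | pose proof (Rmin_l eta (/ INR (S n) / 2)); lra].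
    + pose proof (HFge n (i a)). pose proof (Rmin_r eta (/ INR (S n) / 2)).
      pose proof (bump_near_center (z n) n (i a) ltac:(lra)). pose proof (le_INR _ _ Hmn).
      simpl. lra.
Qed.

Lemma strongly_ULL_bounded_on_chain_components {X : MetricSpace} (h : X -> RealLine) :
  strongly_ULB X -> strongly_ULL h ->
  exists d, 0 < d /\ forall x0, exists M, forall a, chain d x0 a -> h a <= M.
Proof.
  intros [d0 [Hd0 HB]] [d1 [Hd1 HL]]. exists (Rmin d0 d1). split; [apply Rmin_glb_lt; auto|].
  intros x0.
  destruct (lipschitz_on_bounded_image h (chain_component x0 (Rmin d0 d1))) with (a0 := x0)
    as [M HM].
  - destruct (HB x0) as [c [R HR]]. exists c, R. intros a Ha.
    apply HR. exact (chain_weaken _ _ _ _ (Rmin_l d0 d1) Ha).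
  - destruct (HL x0) as [K HK]. exists K. intros a b Ha Hb.
    apply HK; apply chain_weaken with (Rmin d0 d1); auto; apply Rmin_r.
  - apply chain_refl.
  - exists (h x0 + M). intros a Ha. specialize (HM a Ha). simpl in HM.
    rewrite Rabs_minus_sym in HM. pose proof (Rle_abs (h a - h x0)). lra.
Qed.

Lemma cBQC_of_SULL_majorants {X Xh : MetricSpace} (i : X -> Xh) :
  is_completion i -> strongly_ULB X ->
  (forall f : X -> RealLine, cauchy_lipschitz f ->
     exists h : X -> RealLine, strongly_ULL h /\ forall x, f x <= h x + 1) ->
  cofinally_BQ_complete Xh.
Proof.
  intros Hc HB Hmaj. apply NNPP. intros HnP.
  destruct (unbounded_cauchy_lipschitz_of_not_cBQC i Hc HnP) as [f [Hf Hunb]].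
  destruct (Hmaj f Hf) as [h [Hh Hfh]].
  destruct (strongly_ULL_bounded_on_chain_components h HB Hh) as [d [Hd Hbnd]].
  destruct (Hunb d Hd) as [x0 Hx0]. destruct (Hbnd x0) as [M HM].
  destruct (Hx0 (M + 1)) as [a [Ha Hlt]]. specialize (HM a Ha). specialize (Hfh a). simpl in *. lra.
Qed.

Theorem mainTheorem2 (X Xh : MetricSpace) (i : X -> Xh) :
  is_completion i ->
  (cofinally_BQ_complete Xh <->
     (strongly_ULB X /\
      forall (Y : MetricSpace) (f : X -> Y), cauchy_lipschitz f -> strongly_ULL f)) /\
  (cofinally_BQ_complete Xh <->
     (strongly_ULB X /\
      forall f : X -> RealLine, cauchy_lipschitz f -> strongly_ULL f)) /\
  (cofinally_BQ_complete Xh <->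
     (strongly_ULB X /\ SULL_uniformly_dense_in_CC X)).
Proof.
  intros Hc. pose proof (proj1 (proj2 Hc)) as Hi.
  assert (Hself : (forall f : X -> RealLine, cauchy_lipschitz f -> strongly_ULL f) ->
    forall f : X -> RealLine, cauchy_lipschitz f ->
      exists h : X -> RealLine, strongly_ULL h /\ forall x, f x <= h x + 1).
  { intros Hall f Hf. exists f. split; [exact (Hall f Hf) | intros x; simpl; lra]. }
  split; [|split]; split.
  - intros HP. split; [exact (strongly_ULB_of_cBQC i Hi HP)|].
    intros Y. exact (strongly_ULL_of_cBQC i Hi HP Y).
  - intros [HB Hall]. apply (cBQC_of_SULL_majorants i Hc HB), Hself, Hall.
  - intros HP. split; [exact (strongly_ULB_of_cBQC i Hi HP)|].
    exact (strongly_ULL_of_cBQC i Hi HP RealLine).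
  - intros [HB Hall]. apply (cBQC_of_SULL_majorants i Hc HB), Hself, Hall.
  - intros HP. split; [exact (strongly_ULB_of_cBQC i Hi HP)|].
    exact (SULL_uniformly_dense_of_cBQC i Hi HP).
  - intros [HB Hdense]. apply (cBQC_of_SULL_majorants i Hc HB). intros f Hf.
    destruct (Hdense f (cauchy_lipschitz_cauchy_continuous f Hf) 1 Rlt_0_1) as [h [Hh Happ]].
    exists h. split; [exact Hh|]. intros x. specialize (Happ x). simpl in *.
    rewrite Rabs_minus_sym in Happ. pose proof (Rle_abs (f x - h x)). lra.
Qed.
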